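(* Let $\tau_0>0$, $\rho>1$, $n\ge 1$ an integer, and let $k_a,k_p,k_v,h_w>0$. For unknown constants $\gamma_0,\dots,\gamma_{n-1}\in(0,1)$ put $$\tilde k_a:=\Big[1-\tfrac{1}{\rho}+\tfrac{1}{\rho}\sum_{j=0}^{n-1}\tfrac{\gamma_j}{2^j}\Big]k_a ,$$ so that $\tilde k_a$ can take any value in $\big[(1-\tfrac1\rho)k_a,\,(1+\tfrac1\rho)k_a\big]$. For $\tau\in(0,\tau_0]$ define $$\tilde H(s;\tau)=\frac{\tilde k_a s^2+k_v s+k_p}{\tau s^3+s^2+\gamma s+k_p},\qquad \gamma:=k_v+h_w k_p .$$ Then: (a) If $\|\tilde H(j\omega;\tau)\|_\infty\le 1$ for all $\tau\in(0,\tau_0]$, then $\tilde k_a\in(0,1)$. (b) Let $k_a\in\big(0,\frac{1}{1+1/\rho}\big)$ and let $h_w$ satisfy $$h_w>h_{w,lb}(k_a):=2\tau_0\,\frac{1-\left(1-\frac1\rho\right)k_a}{1-\left(1+\frac1\rho\right)^2k_a^2}.$$ Then there exist $k_p,k_v>0$, not depending on the unknown $\gamma_0,\dots,\gamma_{n-1}\in(0,1)$, such that $\tilde H(s;\tau)$ is internally stable and $\|\tilde H(j\omega;\tau)\|_\infty\le 1$ for all $\tau\in(0,\tau_0]$ and every admissible value of $\tilde k_a$. (c) For every $\rho>1$, the minimizer $k_a^*$ of $h_{w,lb}(k_a)$ over $k_a\in\big(0,\frac{1}{1+1/\rho}\big)$ and the corresponding minimum value $h^*_{w,lb}=h_{w,lb}(k_a^*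 )$ are $$k_a^*=\left(\frac{1-\frac{1}{\sqrt\rho}}{1+\frac{1}{\sqrt\rho}}\right)\frac{1}{1+\frac1\rho},\qquad h^*_{w,lb}=\tau_0\,\frac{\left(1+\frac{1}{\sqrt\rho}\right)^2}{1+\frac1\rho}.$$ Correspondingly, with $k_a=k_a^*$ and any $h_w>h^*_{w,lb}$, there exist $k_p,k_v>0$, not depending on the unknown $\gamma_j$, such that $\|\tilde H(j\omega;\tau)\|_\infty\le 1$ for all $\tau\in(0,\tau_0]$.
   Context: The setting is a vehicle platoon. Vehicle $i$ obeys $\ddot x_i=a_i$ and $\tau\dot a_i+a_i=u_i$, where $\tau\in(0,\tau_0]$ is an uncertain parasitic actuation lag. Each vehicle uses the control law $$u_i=k_a w_{i,i-1}(t)a_{i-1}-k_v(v_i-v_{i-1})-k_p\delta_i ,$$ where $\delta_i=x_i-x_{i-1}+d+h_w v_i$ and $h_w$ is the time headway. The communicated acceleration of the predecessor is corrupted by noise: $$w_{i,i-1}(t)=\Big(1-\tfrac1\rho\Big)+\tfrac1\rho\sum_{j=0}^{n-1}\frac{z_{i,j}(t)}{2^j},$$ where the $z_{i,j}$ are independent binary random processes with time-invariant, unknown means $\gamma_j\in(0,1)$ and $\rho>1$ is the signal-to-noise ratio factor. Taking expectations gives the averaged spacing-error propagation $\bar\delta_i(s)=\tilde H(s;\tau)\bar\delta_{i-1}(s)$, with $\tilde k_a=k_a\,\mathbb E[w_{i,i-1}]$. Here $\|\tilde H(j\omega;\tau)\|_\infty=\sup_{\omega\in\mathbb R}|\tilde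 H(j\omega;\tau)|$. Robust string stability means that $\tilde H$ is internally stable (its denominator is Hurwitz) and $\|\tilde H(j\omega;\tau)\|_\infty\le1$ for all $\tau\in(0,\tau_0]$. *)

From HB Require Import structures.
From mathcomp Require Import all_boot all_order all_algebra.
From mathcomp Require Import complex.
Set Implicit Arguments. Unset Strict Implicit. Unset Printing Implicit Defensive.
Import Order.TTheory GRing.Theory Num.Theory.
Local Open Scope ring_scope.
Local Open Scope complex_scope.

Section PlatoonDefs.
Variable R : rcfType.

Definition kta (rho ka : R) (n : nat) (gam : 'I_n -> R) : R :=
  (1 - rho^-1 + rho^-1 * \sum_(j < n) gam j / 2 ^+ j) * ka.

Definition Hnum (kt kv kp : R) (s : R[i]) : R[i] :=
  kt%:C * s ^+ 2 + kv%:C * s + kp%:C.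
Definition Hden (tau g kp : R) (s : R[i]) : R[i] :=
  tau%:C * s ^+ 3 + s ^+ 2 + g%:C * s + kp%:C.

(* ||H~(j w; tau)||_oo <= 1, i.e. |H~(j w)| <= 1 for every real w,
   written as |num(j w)| <= |den(j w)| (no division by zero issues). *)
Definition Hinf_le1 (kt kv kp g tau : R) : Prop :=
  forall w : R, `| Hnum kt kv kp (Complex 0 w) | <= `| Hden tau g kp (Complex 0 w) |.

Definition internally_stable (tau g kp : R) : Prop :=
  forall z : R[i], Hden tau g kp z = 0 -> Re z < 0.

Definition hwlb (tau0 rho ka : R) : R :=
  2 * tau0 * (1 - (1 - rho^-1) * ka) / (1 - (1 + rho^-1) ^+ 2 * ka ^+ 2).

Definition ka_star (rho : R) : R :=
  ((1 - (Num.sqrt rho)^-1) / (1 + (Num.sqrt rho)^-1)) * (1 + rho^-1)^-1.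

Definition hwlb_star (tau0 rho : R) : R :=
  tau0 * (1 + (Num.sqrt rho)^-1) ^+ 2 / (1 + rho^-1).

End PlatoonDefs.

From HB Require Import structures.
From mathcomp Require Import all_boot all_order all_algebra.
From mathcomp Require Import complex ring lra.
Import Order.TTheory GRing.Theory Num.Theory.
Local Open Scope ring_scope.

(* On the imaginary axis
     |den(jw)|^2 - |num(jw)|^2
       = w^2 (tau^2 w^4 + (1 - kt^2 - 2 g tau) w^2 + (g^2 - kv^2 - 2 kp (1 - kt))),
   so the H-infinity bound holds once both coefficients are nonnegative.  Since
   sum_j gam_j / 2^j lies in [0, 2], the averaged gain kt ranges over
   [l, u] = [(1 - 1/rho) ka, (1 + 1/rho) ka].  Choosing kv hw = 1 - l and
   2 g tau0 = 1 - u^2 (with g = kv + hw kp) makes both coefficients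
   nonnegative for every kt in [l, u] and tau <= tau0, and leaves kp > 0
   exactly when hw > hwlb; then hw > tau0, which gives the Routh-Hurwitz
   condition tau kp < g.  Conversely, kt >= 1 is refuted for large W at
   tau = g / W and w = sqrt W, where the denominator of H becomes real while
   the numerator keeps the imaginary part kv w.  Part (c) rests on the identity
     hwlb ka - hwlb_star = tau0 (1 + rho^(-1/2))^2 (1 + 1/rho) (ka - ka_star)^2
                           / (1 - (1 + 1/rho)^2 ka^2). *)

Section Platoon.
Local Open Scope complex_scope.
Context {R : rcfType}.

Lemma normc_le (a b c d : R) :
  (`|Complex a b| <= `|Complex c d|) = (a ^+ 2 + b ^+ 2 <= c ^+ 2 + d ^+ 2).
Proof. by rewrite !normc_def /= lecR ler_sqrt // addr_ge0 ?sqr_ge0. Qed.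

Lemma Hnum_jw (kt kv kp w : R) :
  Hnum kt kv kp (Complex 0 w) = Complex (kp - kt * w ^+ 2) (kv * w).
Proof.
by apply/eqP; rewrite eq_complex /= !expr2 /=; simpc; rewrite andbT; apply/eqP; ring.
Qed.

Lemma HdenE (tau g kp x y : R) : Hden tau g kp (Complex x y) =
  Complex (tau * (x ^+ 3 - 3 * x * y ^+ 2) + (x ^+ 2 - y ^+ 2) + g * x + kp)
          (tau * (3 * x ^+ 2 * y - y ^+ 3) + 2 * x * y + g * y).
Proof.
apply/eqP; rewrite eq_complex /= !exprS !expr0 /=; simpc.
by apply/andP; split; apply/eqP; ring.
Qed.

Lemma Hden_jw (tau g kp w : R) :
  Hden tau g kp (Complex 0 w) = Complex (kp - w ^+ 2) (w * (g - tau * w ^+ 2)).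
Proof. by rewrite HdenE; congr Complex; ring. Qed.

Lemma Hinf_le1_coef_ge0 (kt kv kp g tau : R) :
  0 <= 1 - kt ^+ 2 - 2 * g * tau -> 0 <= g ^+ 2 - kv ^+ 2 - 2 * kp * (1 - kt) ->
  Hinf_le1 kt kv kp g tau.
Proof.
move=> c1_ge0 c0_ge0 w; rewrite Hnum_jw Hden_jw normc_le -subr_ge0.
have -> : (kp - w ^+ 2) ^+ 2 + (w * (g - tau * w ^+ 2)) ^+ 2
          - ((kp - kt * w ^+ 2) ^+ 2 + (kv * w) ^+ 2)
  = w ^+ 2 * (tau ^+ 2 * (w ^+ 2) ^+ 2 + (1 - kt ^+ 2 - 2 * g * tau) * w ^+ 2
              + (g ^+ 2 - kv ^+ 2 - 2 * kp * (1 - kt))) by ring.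
apply: mulr_ge0; first exact: sqr_ge0.
by apply: addr_ge0 => //; apply: addr_ge0; apply: mulr_ge0; rewrite ?sqr_ge0.
Qed.

Lemma Hinf_le1_headway (kt kv kp hw tau : R) :
  0 <= kp -> 1 - kt <= kv * hw -> 2 * (kv + hw * kp) * tau <= 1 - kt ^+ 2 ->
  Hinf_le1 kt kv kp (kv + hw * kp) tau.
Proof.
move=> kp_ge0 kt_le gtau_le; apply: Hinf_le1_coef_ge0; first lra.
have -> : (kv + hw * kp) ^+ 2 - kv ^+ 2 - 2 * kp * (1 - kt)
  = kp * (2 * (kv * hw - (1 - kt)) + hw ^+ 2 * kp) by ring.
apply: mulr_ge0 => //; apply: addr_ge0; first by rewrite mulr_ge0 // subr_ge0.
by rewrite mulr_ge0 ?sqr_ge0.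
Qed.

Lemma Hinf_le1_gain_lt1 [tau0 kt kv kp g : R] :
  0 < tau0 -> 0 < kv -> 0 <= kp -> 0 < g ->
  (forall tau, 0 < tau <= tau0 -> Hinf_le1 kt kv kp g tau) -> kt < 1.
Proof.
move=> tau0_gt0 kv_gt0 kp_ge0 g_gt0 Hle1; rewrite ltNge; apply/negP => kt_ge1.
pose W := kp + g / tau0 + 1.
have g_tau0_ge0 : 0 <= g / tau0 by rewrite divr_ge0 // ltW.
have W_gt0 : 0 < W by rewrite /W; lra.
have W_ge_kp : kp <= W by rewrite /W; lra.
have tauW : 0 < g / W <= tau0.
  rewrite divr_gt0 //= ler_pdivrMr // mulrC -ler_pdivrMr //; rewrite /W; lra.
have := Hle1 _ tauW (Num.sqrt W).
rewrite Hnum_jw Hden_jw normc_le !sqr_sqrtr ?(ltW W_gt0) //.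
rewrite exprMn sqr_sqrtr ?(ltW W_gt0) //.
rewrite divfK ?gt_eqF // subrr mulr0 expr0n /= addr0.
have num_ge : (kp - W) ^+ 2 <= (kp - kt * W) ^+ 2.
  have -> : (kp - kt * W) ^+ 2
    = (kp - W) ^+ 2 + (kt * W - W) * (kt * W + W - 2 * kp) by ring.
  rewrite lerDl; apply: mulr_ge0; nra.
have : 0 < kv ^+ 2 * W by rewrite mulr_gt0 ?exprn_gt0.
lra.
Qed.

Lemma internally_stable_Routh (tau g kp : R) :
  0 < tau -> 0 < g -> 0 < kp -> tau * kp < g -> internally_stable tau g kp.
Proof.
move=> tau_gt0 g_gt0 kp_gt0 Routh [x y]; rewrite HdenE => /eqP.
rewrite eq_complex /= => /andP[/eqP Re0 /eqP Im0].
rewrite -complexRe ltcE /= eqxx /= ltNge; apply/negP => x_ge0.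
have [y0 | y_neq0] := eqVneq y 0.
  move: Re0; rewrite y0 expr0n /= mulr0 !subr0; apply/eqP; rewrite gt_eqF //.
  by rewrite ltr_wpDl // !addr_ge0 ?mulr_ge0 ?exprn_ge0 // ltW.
have Im0' : tau * (3 * x ^+ 2 - y ^+ 2) + 2 * x + g = 0.
  have : y * (tau * (3 * x ^+ 2 - y ^+ 2) + 2 * x + g) = 0 by rewrite -Im0; ring.
  by move/eqP; rewrite mulf_eq0 (negPf y_neq0) => /eqP.
(* eliminating y ^+ 2 between the two equations leaves a polynomial in x
   that is positive for x >= 0 *)
have : tau * (tau * (x ^+ 3 - 3 * x * y ^+ 2) + (x ^+ 2 - y ^+ 2) + g * x + kp)
       - (3 * tau * x + 1) * (tau * (3 * x ^+ 2 - y ^+ 2) + 2 * x + g)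
     = - (8 * tau ^+ 2 * x ^+ 3 + 8 * tau * x ^+ 2 + 2 * x + 2 * tau * g * x
          + (g - tau * kp)) by ring.
rewrite Re0 Im0' !mulr0 subr0 => /eqP; rewrite eq_sym oppr_eq0; apply/negP.
by rewrite gt_eqF // ltr_wpDl ?subr_gt0 // !addr_ge0 ?mulr_ge0 ?exprn_ge0 // ltW.
Qed.

Lemma sum_inv_pow2 (n : nat) :
  \sum_(j < n) ((2 : R) ^+ j)^-1 = 2 - 2 * ((2 : R) ^+ n)^-1.
Proof.
elim: n => [|n IHn]; first by rewrite big_ord0 expr0 invr1 mulr1 subrr.
have pow2_neq0 : (2 : R) ^+ n != 0 by rewrite expf_neq0 // pnatr_eq0.
by rewrite big_ord_recr /= IHn exprS; field.
Qed.

Lemma sum_pow2_weighted_bounds (n : nat) (gam : 'I_n -> R) :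
  (forall j, 0 <= gam j <= 1) -> 0 <= \sum_(j < n) gam j / 2 ^+ j <= 2.
Proof.
move=> gam01; rewrite sumr_ge0 /= => [|j _]; last first.
  by rewrite divr_ge0 ?exprn_ge0 //; case/andP: (gam01 j).
apply: (@le_trans _ _ (\sum_(j < n) ((2 : R) ^+ j)^-1)).
  apply: ler_sum => j _; rewrite ler_pdivrMr ?exprn_gt0 // mulVf ?expf_neq0 ?pnatr_eq0 //.
  by case/andP: (gam01 j).
by rewrite sum_inv_pow2 lerBlDr lerDl mulr_ge0 // invr_ge0 exprn_ge0.
Qed.

Lemma kta_bounds [rho ka : R] [n : nat] [gam : 'I_n -> R] :
  0 <= rho -> 0 <= ka -> (forall j, 0 <= gam j <= 1) ->
  (1 - rho^-1) * ka <= kta rho ka gam <= (1 + rho^-1) * ka.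
Proof.
move=> rho_ge0 ka_ge0 /sum_pow2_weighted_bounds /andP[S_ge0 S_le2].
have rhoV_ge0 : 0 <= rho^-1 by rewrite invr_ge0.
rewrite /kta; set S := \sum_(j < n) _.
apply/andP; split; rewrite -subr_ge0.
  have -> : (1 - rho^-1 + rho^-1 * S) * ka - (1 - rho^-1) * ka = rho^-1 * S * ka by ring.
  by rewrite !mulr_ge0.
have -> : (1 + rho^-1) * ka - (1 - rho^-1 + rho^-1 * S) * ka
  = rho^-1 * (2 - S) * ka by ring.
by rewrite !mulr_ge0 ?subr_ge0.
Qed.

Lemma robust_gains [tau0 l u hw : R] :
  0 < tau0 -> 0 <= l <= u -> u < 1 -> 2 * tau0 * (1 - l) < hw * (1 - u ^+ 2) ->
  exists kp kv : R, 0 < kp /\ 0 < kv /\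
    forall kt tau, l <= kt <= u -> 0 < tau <= tau0 ->
      internally_stable tau (kv + hw * kp) kp /\
      Hinf_le1 kt kv kp (kv + hw * kp) tau.
Proof.
move=> tau0_gt0 /andP[l_ge0 l_le_u] u_lt1 hw_gt.
have D_gt0 : 0 < 1 - u ^+ 2 by nra.
have hw_gt_tau0 : tau0 < hw.
  have D_le : 1 - u ^+ 2 <= 2 * (1 - l) by nra.
  have : tau0 * (1 - u ^+ 2) < hw * (1 - u ^+ 2) by nra.
  by rewrite ltr_pM2r.
have hw_gt0 : 0 < hw by lra.
pose g := (1 - u ^+ 2) / (2 * tau0).
pose kv := (1 - l) / hw.
pose kp := (hw * g - (1 - l)) / hw ^+ 2.
have g_tau0 : 2 * g * tau0 = 1 - u ^+ 2 by rewrite /g; field; rewrite gt_eqF.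
have kv_hw : kv * hw = 1 - l by rewrite /kv divfK ?gt_eqF.
have g_def : kv + hw * kp = g by rewrite /kv /kp; field; rewrite gt_eqF.
have kv_gt0 : 0 < kv by rewrite divr_gt0 //; lra.
have kp_gt0 : 0 < kp.
  rewrite divr_gt0 ?exprn_gt0 // subr_gt0.
  have : 2 * tau0 * (1 - l) < 2 * tau0 * (hw * g).
    rewrite [X in _ < X](_ : _ = hw * (2 * g * tau0)); last by ring.
    by rewrite g_tau0.
  by rewrite ltr_pM2l // mulr_gt0.
exists kp, kv; split => //; split => // kt tau.
move=> /andP[l_le_kt kt_le_u] /andP[tau_gt0 tau_le].
have g_gt0 : 0 < g by rewrite -g_def addr_gt0 // mulr_gt0.
split.
  by rewrite g_def; apply: internally_stable_Routh => //; rewrite -g_def; nra.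
apply: Hinf_le1_headway; rewrite ?g_def; [exact: ltW | lra |].
have : 2 * g * tau <= 2 * g * tau0 by rewrite ler_wpM2l // ltW // mulr_gt0.
nra.
Qed.

Lemma gain_range [rho ka : R] :
  0 < rho -> 0 < ka < (1 + rho^-1)^-1 -> 0 < (1 + rho^-1) * ka < 1.
Proof.
move=> rho_gt0 /andP[ka_gt0 ka_lt]; have rhoV_gt0 : 0 < rho^-1 by rewrite invr_gt0.
by rewrite mulr_gt0 ?addr_gt0 //= -ltr_pdivlMl ?mulr1 // addr_gt0.
Qed.

Lemma hwlb_lt (tau0 rho ka hw : R) : 0 < rho -> 0 < ka < (1 + rho^-1)^-1 ->
  (hwlb tau0 rho ka < hw)
  = (2 * tau0 * (1 - (1 - rho^-1) * ka) < hw * (1 - ((1 + rho^-1) * ka) ^+ 2)).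
Proof.
move=> rho_gt0 /(gain_range rho_gt0) /andP[u_gt0 u_lt1].
by rewrite /hwlb exprMn ltr_pdivrMr // -exprMn subr_gt0; nra.
Qed.

Lemma robust_gains_kta (n : nat) [tau0 rho ka hw : R] :
  0 < tau0 -> 1 < rho -> 0 < ka < (1 + rho^-1)^-1 -> hwlb tau0 rho ka < hw ->
  exists kp kv : R, 0 < kp /\ 0 < kv /\
    forall gam : 'I_n -> R, (forall j, 0 < gam j < 1) ->
    forall tau, 0 < tau <= tau0 ->
      internally_stable tau (kv + hw * kp) kp /\
      Hinf_le1 (kta rho ka gam) kv kp (kv + hw * kp) tau.
Proof.
move=> tau0_gt0 rho_gt1 ka_range; have rho_gt0 : 0 < rho by lra.
rewrite hwlb_lt // => hw_gt.
have /andP[u_gt0 u_lt1] := gain_range rho_gt0 ka_range.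
have /andP[ka_gt0 _] := ka_range.
have rhoV_lt1 : rho^-1 < 1 by rewrite invf_lt1.
have rhoV_gt0 : 0 < rho^-1 by rewrite invr_gt0.
have l_range : 0 <= (1 - rho^-1) * ka <= (1 + rho^-1) * ka.
  by apply/andP; split; nra.
have [kp [kv [kp_gt0 [kv_gt0 robust]]]] := robust_gains tau0_gt0 l_range u_lt1 hw_gt.
exists kp, kv; split => //; split => // gam gam01 tau tau_range.
apply: robust tau_range; apply: kta_bounds; rewrite ?ltW // => j.
by case/andP: (gam01 j) => /ltW -> /ltW ->.
Qed.

Lemma hwlb_sub_star (tau0 rho ka : R) : 1 < rho -> 0 < ka < (1 + rho^-1)^-1 ->
  hwlb tau0 rho ka - hwlb_star tau0 rho
  = tau0 * (1 + (Num.sqrt rho)^-1) ^+ 2 * (1 + rho^-1) * (ka - ka_star rho) ^+ 2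
    / (1 - ((1 + rho^-1) * ka) ^+ 2).
Proof.
move=> rho_gt1 ka_range; have rho_gt0 : 0 < rho by lra.
have /andP[u_gt0 u_lt1] := gain_range rho_gt0 ka_range.
have sqrt_gt0 : 0 < Num.sqrt rho by rewrite sqrtr_gt0.
have rhoV : rho^-1 = ((Num.sqrt rho)^-1) ^+ 2 by rewrite exprVn sqr_sqrtr // ltW.
rewrite /hwlb /hwlb_star /ka_star rhoV in u_gt0 u_lt1 *.
set q := (Num.sqrt rho)^-1 in u_gt0 u_lt1 *.
have q_gt0 : 0 < q by rewrite invr_gt0.
have D_gt0 : 0 < 1 - ((1 + q ^+ 2) * ka) ^+ 2 by nra.
by field; rewrite !gt_eqF // ?addr_gt0 ?exprn_gt0.
Qed.

Lemma ka_star_range [rho : R] : 1 < rho -> 0 < ka_star rho < (1 + rho^-1)^-1.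
Proof.
move=> rho_gt1; have sqrt_gt1 : 1 < Num.sqrt rho by rewrite -sqrtr1 ltr_sqrt //; lra.
have q_gt0 : 0 < (Num.sqrt rho)^-1 by rewrite invr_gt0; lra.
have q_lt1 : (Num.sqrt rho)^-1 < 1 by rewrite invf_lt1 //; lra.
have c_gt0 : 0 < (1 - (Num.sqrt rho)^-1) / (1 + (Num.sqrt rho)^-1).
  by rewrite divr_gt0; lra.
have c_lt1 : (1 - (Num.sqrt rho)^-1) / (1 + (Num.sqrt rho)^-1) < 1.
  by rewrite ltr_pdivrMr; lra.
have rV_gt0 : 0 < (1 + rho^-1)^-1 by rewrite !invr_gt0 addr_gt0 // invr_gt0; lra.
by rewrite /ka_star mulr_gt0 //= -[X in _ < X]mul1r ltr_pM2r.
Qed.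

Lemma hwlb_ka_star (tau0 rho : R) :
  1 < rho -> hwlb tau0 rho (ka_star rho) = hwlb_star tau0 rho.
Proof.
move=> rho_gt1; apply/eqP; rewrite -subr_eq0.
by rewrite hwlb_sub_star ?ka_star_range // subrr expr0n /= !(mulr0, mul0r).
Qed.

Lemma hwlb_star_le (tau0 rho ka : R) : 0 <= tau0 -> 1 < rho ->
  0 < ka < (1 + rho^-1)^-1 -> hwlb_star tau0 rho <= hwlb tau0 rho ka.
Proof.
move=> tau0_ge0 rho_gt1 ka_range; have rho_gt0 : 0 < rho by lra.
have /andP[u_gt0 u_lt1] := gain_range rho_gt0 ka_range.
rewrite -subr_ge0 hwlb_sub_star // divr_ge0 //; last by rewrite subr_ge0 expr_le1 ?ltW.
apply: mulr_ge0; last exact: sqr_ge0.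
apply: mulr_ge0; first by apply: mulr_ge0; rewrite ?sqr_ge0.
by rewrite addr_ge0 // invr_ge0 ltW.
Qed.

Lemma hwlb_eq_star (tau0 rho ka : R) : 0 < tau0 -> 1 < rho ->
  0 < ka < (1 + rho^-1)^-1 -> hwlb tau0 rho ka = hwlb_star tau0 rho ->
  ka = ka_star rho.
Proof.
move=> tau0_gt0 rho_gt1 ka_range /eqP; rewrite -subr_eq0 hwlb_sub_star //.
have rho_gt0 : 0 < rho by lra.
have /andP[u_gt0 u_lt1] := gain_range rho_gt0 ka_range.
have sqrt_gt0 : 0 < Num.sqrt rho by rewrite sqrtr_gt0.
have c_neq0 : tau0 * (1 + (Num.sqrt rho)^-1) ^+ 2 * (1 + rho^-1) != 0.
  by rewrite !mulf_neq0 ?expf_neq0 ?gt_eqF // addr_gt0 // invr_gt0.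
have D_neq0 : 1 - ((1 + rho^-1) * ka) ^+ 2 != 0.
  by rewrite gt_eqF // subr_gt0 expr_lt1 // ltW.
rewrite mulf_eq0 invr_eq0 (negPf D_neq0) orbF mulf_eq0 (negPf c_neq0) /=.
by rewrite sqrf_eq0 subr_eq0 => /eqP.
Qed.

End Platoon.

Theorem theorem2 (R : rcfType) (tau0 rho : R) (n : nat) :
  0 < tau0 -> 1 < rho -> (1 <= n)%N ->
  (* (a) *)
  (forall (ka kp kv hw : R) (gam : 'I_n -> R),
     0 < ka -> 0 < kp -> 0 < kv -> 0 < hw ->
     (forall j, 0 < gam j < 1) ->
     (forall tau, 0 < tau <= tau0 ->
        Hinf_le1 (kta rho ka gam) kv kp (kv + hw * kp) tau) ->
     0 < kta rho ka gam < 1)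
  /\
  (* (b) *)
  (forall ka hw : R,
     0 < ka < (1 + rho^-1)^-1 ->
     hwlb tau0 rho ka < hw ->
     exists kp kv : R, 0 < kp /\ 0 < kv /\
       forall gam : 'I_n -> R, (forall j, 0 < gam j < 1) ->
       forall tau, 0 < tau <= tau0 ->
         internally_stable tau (kv + hw * kp) kp /\
         Hinf_le1 (kta rho ka gam) kv kp (kv + hw * kp) tau)
  /\
  (* (c) *)
  (0 < ka_star rho < (1 + rho^-1)^-1 /\
   (forall ka, 0 < ka < (1 + rho^-1)^-1 ->
      hwlb tau0 rho (ka_star rho) <= hwlb tau0 rho ka) /\
   (forall ka, 0 < ka < (1 + rho^-1)^-1 ->
      hwlb tau0 rho ka = hwlb tau0 rho (ka_star rho) -> ka = ka_star rho) /\
   hwlb tau0 rho (ka_star rho) = hwlb_star tau0 rho /\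
   (forall hw : R, hwlb_star tau0 rho < hw ->
      exists kp kv : R, 0 < kp /\ 0 < kv /\
        forall gam : 'I_n -> R, (forall j, 0 < gam j < 1) ->
        forall tau, 0 < tau <= tau0 ->
          Hinf_le1 (kta rho (ka_star rho) gam) kv kp (kv + hw * kp) tau)).
Proof.
move=> tau0_gt0 rho_gt1 _; have rho_gt0 : 0 < rho by lra.
split.
  move=> ka kp kv hw gam ka_gt0 kp_gt0 kv_gt0 hw_gt0 gam01 Hle1.
  have gam01w j : 0 <= gam j <= 1 by case/andP: (gam01 j) => /ltW -> /ltW ->.
  have /andP[kt_ge _] := kta_bounds (ltW rho_gt0) (ltW ka_gt0) gam01w.
  apply/andP; split.
    by apply: lt_le_trans kt_ge; rewrite mulr_gt0 // subr_gt0 invf_lt1.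
  have g_gt0 : 0 < kv + hw * kp by rewrite addr_gt0 // mulr_gt0.
  exact: Hinf_le1_gain_lt1 tau0_gt0 kv_gt0 (ltW kp_gt0) g_gt0 Hle1.
split; first by move=> ka hw; apply: robust_gains_kta.
have ka_star_ok := ka_star_range rho_gt1.
split=> //; split.
  by move=> ka ka_range; rewrite hwlb_ka_star // hwlb_star_le // ltW.
split.
  by move=> ka ka_range; rewrite hwlb_ka_star //; apply: hwlb_eq_star.
split; first exact: hwlb_ka_star.
move=> hw; rewrite -hwlb_ka_star // => /(robust_gains_kta n tau0_gt0 rho_gt1 ka_star_ok).
move=> [kp [kv [kp_gt0 [kv_gt0 robust]]]]; exists kp, kv; split=> //; split=> //.
by move=> gam gam01 tau tau_range; case: (robust gam gam01 tau tau_range).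
Qed.
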